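(* Let $r>1$ and let $k,\ell,m$ be arbitrary positive integers. Let $n$ be the number of vertices of the $(k,\ell,m)$-megastar, choose $x_0$ uniformly at random from its vertex set, and run the Moran process with fitness $r$ on it with initial mutant $x_0$. Then the process fixates with probability at most $1-1/(52r^2\sqrt{n})$.
   Context: Moran process: given a directed graph $G$ and fitness $r$, one vertex $x_0$ is a mutant, the rest non-mutants. At each step a vertex $v$ is chosen with probability proportional to fitness (mutants $r$, non-mutants $1$), an out-neighbour $w$ of $v$ is chosen uniformly at random and the state of $v$ is copied to $w$. Fixation: eventually every vertex is a mutant. The $(k,\ell,m)$-megastar: disjoint union of reservoirs $R_1,\dots,R_\ell$ (size $m$), cliques $K_1,\dots,K_\ell$ (size $k$), feeders $a_1,\dots,a_\ell$, and centre $v^*$ (so $n=1+\ell(m+k+1)$); edges from $v^*$ to all reservoir vertices, from each vertex of $R_i$ to $a_i$, from $a_i$ to each vertex of $K_i$, both directions between distinct vertices of each $K_i$, and from every clique vertex to $v^*$. *)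

From HB Require Import structures.
From mathcomp Require Import all_boot all_order all_algebra.
From mathcomp Require Import all_classical all_reals all_analysis.
Set Implicit Arguments. Unset Strict Implicit. Unset Printing Implicit Defensive.
Import Order.TTheory GRing.Theory Num.Theory numFieldNormedType.Exports.
Local Open Scope ring_scope.

Section Moran.
Variables (R : realType) (V : finType) (edge : rel V) (r : R).

Definition outN (v : V) : {set V} := [set w | edge v w].
Definition outdeg (v : V) : nat := #|outN v|.

Definition fit (S : {set V}) (v : V) : R := if v \in S then r else 1.
Definition total_fit (S : {set V}) : R := \sum_(v : V) fit S v.

Definition moran_update (S : {set V}) (v w : V) : {set V} :=
  if v \in S then w |: S else S :\ w.

Definition moran_trans (S : {set V}) (v w : V) : R :=
  (fit S v / total_fit S) * (outdeg v)%:R^-1.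

(* reach_prob t S = probability that the Moran process started in state S
   is in the all-mutant state (setT) at time t.  Since setT is absorbing,
   this equals the probability of having fixated by time t. *)
Fixpoint reach_prob (t : nat) (S : {set V}) : R :=
  match t with
  | 0%N => (S == [set: V])%:R
  | t'.+1 => \sum_(v : V) \sum_(w in outN v)
               moran_trans S v w * reach_prob t' (moran_update S v w)
  end.

(* fixation probability from initial mutant set S: probability that the
   process eventually reaches setT = limit of the (nondecreasing) reach_prob *)
Definition fixation_prob (S : {set V}) : R := limn (fun t : nat => reach_prob t S : R^o).

Definition fixation_prob_uniform : R :=
  (#|V|%:R)^-1 * \sum_(x0 : V) fixation_prob [set x0].
End Moran.

(* None = centre v*;  Some (i, inl (inl j)) = j-th vertex of reservoir R_i;
   Some (i, inl (inr j)) = j-th vertex of clique K_i;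
   Some (i, inr tt) = feeder a_i. *)
Definition megastar_V (k l m : nat) : finType :=
  option ('I_l * (('I_m + 'I_k) + unit))%type.

Definition megastar_edge (k l m : nat) : rel (megastar_V k l m) :=
  fun x y =>
    match x, y with
    | None, Some (_, inl (inl _)) => true                    (* v* -> R_i *)
    | Some (i, inl (inl _)), Some (i', inr _) => i == i'     (* R_i -> a_i *)
    | Some (i, inr _), Some (i', inl (inr _)) => i == i'     (* a_i -> K_i *)
    | Some (i, inl (inr j)), Some (i', inl (inr j')) =>
        (i == i') && (j != j')                               (* within K_i *)
    | Some (_, inl (inr _)), None => true                    (* K_i -> v* *)
    | _, _ => false
    end.

From HB Require Import structures.
From mathcomp Require Import all_boot all_order all_algebra.
From mathcomp Require Import all_classical all_reals all_analysis.
From mathcomp Require Import ring lra zify.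
Set Implicit Arguments. Unset Strict Implicit. Unset Printing Implicit Defensive.
Import Order.TTheory GRing.Theory Num.Theory numFieldNormedType.Exports.
Local Open Scope ring_scope.

(* Weight each vertex v by some q_v in (0, 1] and follow Q(S) = prod_{v in S} q_v
   along the mutant set S.  If the expected one-step change of Q is nonnegative
   from every state (its drift [qdrift] is nonnegative), then 1 - Q(S) + Q(V) is a
   bounded supermartingale that is at least 1 at fixation, so fixation from {x}
   has probability at most 1 - q_x + Q(V).

   On the megastar take q_v = 1 / (1 + a_v) with odds a_v = r^2 at the centre and
   in the cliques, r^2 l in the reservoirs and r / m at the feeders.  The drift
   splits over the branches; inside a branch the edges centre -> reservoir ->
   feeder gain at least as much as the edges feeder -> clique -> centre can lose,
   and the clique-internal edges cancel in pairs.  With p = 1 / (1 + r^2) we get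
   sum_v q_v >= p (1 + m + l k + l) >= p sqrt n and Q(V) <= p^(1 + l (m + k))
   <= p / (2 sqrt n), so the average fixation probability is at most
   1 - p / (2 sqrt n) <= 1 - 1 / (52 r^2 sqrt n). *)

Section MoranProcess.
Variables (R : realType) (V : finType) (edge : rel V) (r : R).
Hypothesis r_gt0 : 0 < r.
Hypothesis V_gt0 : (0 < #|V|)%N.
Hypothesis outdeg_gt0 : forall v, (0 < outdeg edge v)%N.

Lemma fit_gt0 (S : {set V}) v : 0 < fit r S v.
Proof. by rewrite /fit; case: ifP. Qed.

Lemma total_fit_gt0 (S : {set V}) : 0 < total_fit r S.
Proof.
have [v0 _] := card_gt0P V_gt0.
rewrite /total_fit (bigD1 v0) //= ltr_wpDr ?fit_gt0 //.
by apply: sumr_ge0 => v _; apply/ltW/fit_gt0.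
Qed.

Lemma moran_trans_ge0 (S : {set V}) v w : 0 <= moran_trans edge r S v w.
Proof.
by rewrite /moran_trans !mulr_ge0 ?invr_ge0 ?ler0n // ltW ?fit_gt0 ?total_fit_gt0.
Qed.

Lemma sum_outN_outdeg_inv v :
  \sum_(w in outN edge v) (outdeg edge v)%:R^-1 = 1 :> R.
Proof.
rewrite sumr_const -/(outdeg edge v) -[_ *+ _]mulr_natr mulVf //.
by rewrite pnatr_eq0 -lt0n outdeg_gt0.
Qed.

Lemma sum_moran_trans (S : {set V}) :
  \sum_v \sum_(w in outN edge v) moran_trans edge r S v w = 1.
Proof.
under eq_bigr => v _ do rewrite -mulr_sumr sum_outN_outdeg_inv mulr1.
by rewrite -mulr_suml mulfV // gt_eqF ?total_fit_gt0.
Qed.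

Lemma moran_update_setT v w : moran_update [set: V] v w = [set: V].
Proof. by rewrite /moran_update finset.in_setT finset.setUT. Qed.

Lemma reach_prob_setT t : reach_prob edge r t [set: V] = 1.
Proof.
elim: t => [|t IHt] /=; first by rewrite eqxx.
rewrite -[RHS](sum_moran_trans [set: V]).
by apply: eq_bigr => v _; apply: eq_bigr => w _; rewrite moran_update_setT IHt mulr1.
Qed.

Lemma reach_prob_ge0 t (S : {set V}) : 0 <= reach_prob edge r t S.
Proof.
elim: t S => [|t IHt] S /=; first exact: ler0n.
by apply: sumr_ge0 => v _; apply: sumr_ge0 => w _; rewrite mulr_ge0 ?moran_trans_ge0.
Qed.

Lemma reach_prob_nondecreasing t (S : {set V}) :
  reach_prob edge r t S <= reach_prob edge r t.+1 S.
Proof.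
elim: t S => [|t IHt] S.
  have [->|/negbTE S_neqT] := eqVneq S [set: V]; first by rewrite !reach_prob_setT.
  by rewrite [X in X <= _]/= S_neqT (reach_prob_ge0 1).
by apply: ler_sum => v _; apply: ler_sum => w _; rewrite ler_wpM2l ?moran_trans_ge0.
Qed.

Section Supermartingale.
Variable f : {set V} -> R.
Hypothesis f_ge0 : forall S, 0 <= f S.
Hypothesis f_setT : 1 <= f [set: V].
Hypothesis f_super : forall S,
  \sum_v \sum_(w in outN edge v) moran_trans edge r S v w * f (moran_update S v w) <= f S.

Lemma reach_prob_le_super t (S : {set V}) : reach_prob edge r t S <= f S.
Proof.
elim: t S => [|t IHt] S /=.
  by have [->|_] := eqVneq S [set: V].
apply: le_trans (f_super S); apply: ler_sum => v _; apply: ler_sum => w _.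
by rewrite ler_wpM2l ?moran_trans_ge0.
Qed.

Lemma fixation_prob_le_super (S : {set V}) : fixation_prob edge r S <= f S.
Proof.
set u := fun t => reach_prob edge r t S : R^o.
have u_nd : nondecreasing_seq u.
  by apply/nondecreasing_seqP => t; apply: reach_prob_nondecreasing.
have u_bd : has_ubound (range u) by exists (f S) => _ [t _ <-]; apply: reach_prob_le_super.
have u_cvg := nondecreasing_cvgn u_nd u_bd.
rewrite /fixation_prob -/u (cvg_lim _ u_cvg) //.
by apply: (cvgr_to_le u_cvg); apply: nearW => t; apply: reach_prob_le_super.
Qed.
End Supermartingale.
End MoranProcess.

Section ProductPotential.
Variables (R : realType) (V : finType) (edge : rel V) (r : R) (q : V -> R).
Hypothesis r_gt0 : 0 < r.
Hypothesis V_gt0 : (0 < #|V|)%N.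
Hypothesis outdeg_gt0 : forall v, (0 < outdeg edge v)%N.
Hypothesis q_gt0 : forall v, 0 < q v.
Hypothesis q_le1 : forall v, q v <= 1.

Definition qprod (S : {set V}) : R := \prod_(v in S) q v.

Definition qgain (S : {set V}) (v w : V) : R :=
  if v \in S then (if w \in S then 0 else r * (q w - 1))
  else (if w \in S then (q w)^-1 - 1 else 0).

Definition qdrift (S : {set V}) : R :=
  \sum_v (outdeg edge v)%:R^-1 * \sum_(w in outN edge v) qgain S v w.

Lemma qprod_ge0 S : 0 <= qprod S.
Proof. by apply: prodr_ge0 => v _; apply/ltW. Qed.

Lemma qprod_le1 S : qprod S <= 1.
Proof. by apply: prodr_ile1 => v _; rewrite ltW ?q_le1. Qed.

Lemma fit_mul_qprod_update S v w :
  fit r S v * qprod (moran_update S v w) = qprod S * (fit r S v + qgain S v w).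
Proof.
rewrite /moran_update /fit /qgain /qprod.
case vS: (v \in S); case wS: (w \in S).
- by rewrite (finset.setUidPr _) ?finset.sub1set // addr0 mulrC.
- by rewrite big_setU1 ?wS //=; ring.
- rewrite [in RHS](big_setD1 _ wS) addrC subrK mul1r.
  by rewrite mulrC mulKf // gt_eqF.
- have -> : S :\ w = S.
    by apply/setP => u; rewrite !inE; case: eqVneq => // ->; rewrite wS.
  by rewrite addr0 mulrC.
Qed.

Lemma expected_qprod S :
  \sum_v \sum_(w in outN edge v) moran_trans edge r S v w * qprod (moran_update S v w)
  = qprod S * (1 + qdrift S / total_fit r S).
Proof.
have W_gt0 := total_fit_gt0 r_gt0 V_gt0 S.
transitivity (qprod S / total_fit r S *
  \sum_v (fit r S v + (outdeg edge v)%:R^-1 * \sum_(w in outN edge v) qgain S v w)).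
  rewrite mulr_sumr; apply: eq_bigr => v _.
  have -> : fit r S v = \sum_(w in outN edge v) (outdeg edge v)%:R^-1 * fit r S v.
    by rewrite -mulr_suml sum_outN_outdeg_inv ?mul1r.
  rewrite mulr_sumr -big_split mulr_sumr /=; apply: eq_bigr => w _.
  rewrite /moran_trans.
  transitivity ((total_fit r S)^-1 * (outdeg edge v)%:R^-1 *
                (fit r S v * qprod (moran_update S v w))); first by ring.
  by rewrite fit_mul_qprod_update; ring.
by rewrite big_split /= -/(total_fit r S) -/(qdrift S); field; rewrite gt_eqF.
Qed.

Lemma fixation_prob_le_qprod (qdrift_ge0 : forall S, 0 <= qdrift S) x :
  fixation_prob edge r [set x] <= 1 - q x + qprod [set: V].
Proof.
have -> : q x = qprod [set x] by rewrite /qprod big_set1.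
apply: (fixation_prob_le_super r_gt0 V_gt0 outdeg_gt0
  (f := fun S => 1 - qprod S + qprod [set: V])).
- by move=> S; have := qprod_le1 S; have := qprod_ge0 [set: V]; lra.
- lra.
move=> S /=.
under eq_bigr => v _ do under eq_bigr => w _ do rewrite addrAC mulrBr.
under eq_bigr => v _ do rewrite sumrB -mulr_suml.
rewrite sumrB -mulr_suml sum_moran_trans // expected_qprod.
have gain_ge0 : 0 <= qprod S * (qdrift S / total_fit r S).
  by rewrite !mulr_ge0 ?qprod_ge0 ?qdrift_ge0 ?invr_ge0 ?ltW ?total_fit_gt0.
lra.
Qed.

Lemma fixation_prob_uniform_le (qdrift_ge0 : forall S, 0 <= qdrift S) :
  fixation_prob_uniform edge r <= 1 + qprod [set: V] - #|V|%:R^-1 * \sum_v q v.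
Proof.
have n_gt0 : 0 < #|V|%:R :> R by rewrite ltr0n.
rewrite /fixation_prob_uniform; set P := qprod [set: V].
have -> : 1 + P - #|V|%:R^-1 * \sum_v q v = #|V|%:R^-1 * \sum_v (1 - q v + P).
  rewrite !big_split /= sumrN !sumr_const -[_ *+ _]mulr_natl -[P *+ _]mulr_natl.
  by field; rewrite gt_eqF.
rewrite ler_wpM2l ?invr_ge0 ?ler0n //; apply: ler_sum => x _.
exact: fixation_prob_le_qprod.
Qed.
End ProductPotential.

Lemma big_outN_mkcond (V : finType) (edge : rel V) (T : Type) (idx : T)
    (op : Monoid.com_law idx) (v : V) (F : V -> T) :
  \big[op/idx]_(w in outN edge v) F w = \big[op/idx]_w (if edge v w then F w else idx).
Proof. by rewrite big_mkcond; apply: eq_bigr => w _; rewrite inE. Qed.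

Local Notation centre := None.
Local Notation reservoir i j := (Some (i, inl (inl j))).
Local Notation clique i j := (Some (i, inl (inr j))).
Local Notation feeder i := (Some (i, inr tt)).

Section MegastarGraph.
Variables (k l m : nat) (T : Type) (idx : T) (op : Monoid.com_law idx).
Local Notation V := (megastar_V k l m).
Local Notation edge := (@megastar_edge k l m).

Lemma big_megastar (F : V -> T) :
  \big[op/idx]_v F v = op (F centre) (\big[op/idx]_(i < l)
    op (op (\big[op/idx]_(j < m) F (reservoir i j)) (\big[op/idx]_(j < k) F (clique i j)))
       (F (feeder i))).
Proof.
rewrite (bigD1 None) //=; congr (op _ _).
rewrite (reindex_omap Some id) /=; last by case.
rewrite (eq_bigl predT) => [|[i x]]; last by rewrite eqxx.
rewrite (eq_bigr (fun p => F (Some (p.1, p.2)))) => [|[]//].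
rewrite -(pair_bigA _ (fun i x => F (Some (i, x)))); apply: eq_bigr => i _.
by rewrite !big_sumType (big_pred1 tt) // => -[].
Qed.

Lemma big_eq_if (I : finType) (i : I) (G : I -> T) :
  \big[op/idx]_(i' : I) (if i == i' then G i' else idx) = G i.
Proof. by rewrite -big_mkcond (big_pred1 i) // => i'; rewrite eq_sym. Qed.

Lemma big_outN_centre (F : V -> T) :
  \big[op/idx]_(w in outN edge centre) F w
  = \big[op/idx]_(i < l) \big[op/idx]_(j < m) F (reservoir i j).
Proof.
rewrite big_outN_mkcond big_megastar /= Monoid.mul1m.
by apply: eq_bigr => i _; rewrite big1_eq !Monoid.mulm1.
Qed.

Lemma big_outN_reservoir i j (F : V -> T) :
  \big[op/idx]_(w in outN edge (reservoir i j)) F w = F (feeder i).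
Proof.
rewrite big_outN_mkcond big_megastar /= Monoid.mul1m.
under eq_bigr => i' _ do rewrite !big1_eq !Monoid.mul1m.
exact: big_eq_if.
Qed.

Lemma big_outN_feeder i (F : V -> T) :
  \big[op/idx]_(w in outN edge (feeder i)) F w = \big[op/idx]_(j < k) F (clique i j).
Proof.
rewrite big_outN_mkcond big_megastar /= Monoid.mul1m.
under eq_bigr => i' _ do rewrite big1_eq Monoid.mul1m Monoid.mulm1.
rewrite exchange_big /=; apply: eq_big => // j _.
exact: (big_eq_if i (fun i0 => F (clique i0 j))).
Qed.

Lemma big_outN_clique i j (F : V -> T) :
  \big[op/idx]_(w in outN edge (clique i j)) F w
  = op (F centre) (\big[op/idx]_(j' < k | j' != j) F (clique i j')).
Proof.
rewrite big_outN_mkcond big_megastar /=; congr (op _ _).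
under eq_bigr => i' _ do rewrite big1_eq Monoid.mul1m Monoid.mulm1.
rewrite exchange_big [RHS]big_mkcond /=; apply: eq_big => // j' _.
have [_|_] := eqVneq j' j; first by rewrite big1 // => i' _; rewrite andbF.
under eq_bigr => i' _ do rewrite /= andbT.
exact: (big_eq_if i (fun i' => F (clique i' j'))).
Qed.
End MegastarGraph.

Lemma card_megastar (k l m : nat) : #|megastar_V k l m| = (1 + l * (m + k + 1))%N.
Proof. by rewrite card_option card_prod !card_sum !card_ord card_unit. Qed.

Lemma sqrt_card_megastar_gt0 (R : realType) (k l m : nat) :
  0 < Num.sqrt #|megastar_V k l m|%:R :> R.
Proof. by rewrite sqrtr_gt0 ltr0n card_megastar. Qed.

Section MegastarDrift.
Variables (R : realType) (k l m : nat) (r : R).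
Hypothesis k_gt0 : (0 < k)%N.
Hypothesis l_gt0 : (0 < l)%N.
Hypothesis m_gt0 : (0 < m)%N.
Local Notation V := (megastar_V k l m).
Variable q : V -> R.
Local Notation edge := (@megastar_edge k l m).
Local Notation E := (qgain r q).

Lemma outdeg_centre : outdeg edge centre = (l * m)%N.
Proof.
rewrite /outdeg -sum1_card big_outN_centre.
under eq_bigr do rewrite sum1_card card_ord.
by rewrite sum_nat_const card_ord.
Qed.

Lemma outdeg_reservoir i j : outdeg edge (reservoir i j) = 1%N.
Proof. by rewrite /outdeg -sum1_card big_outN_reservoir. Qed.

Lemma outdeg_feeder i : outdeg edge (feeder i) = k.
Proof. by rewrite /outdeg -sum1_card big_outN_feeder sum1_card card_ord. Qed.

Lemma outdeg_clique i j : outdeg edge (clique i j) = k.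
Proof.
by rewrite /outdeg -sum1_card big_outN_clique /= sum1_card (cardC1 j) card_ord add1n prednK.
Qed.

Lemma outdeg_megastar_gt0 v : (0 < outdeg edge v)%N.
Proof.
case: v => [[i [[j|j]|[]]]|].
- by rewrite outdeg_reservoir.
- by rewrite outdeg_clique.
- by rewrite outdeg_feeder.
- by rewrite outdeg_centre muln_gt0 l_gt0.
Qed.

Definition branch_drift (S : {set V}) (i : 'I_l) : R :=
  (l * m)%:R^-1 * \sum_(j < m) E S centre (reservoir i j)
  + \sum_(j < m) E S (reservoir i j) (feeder i)
  + k%:R^-1 * \sum_(j < k) (E S (feeder i) (clique i j) + E S (clique i j) centre)
  + k%:R^-1 * \sum_(j < k) \sum_(j' < k | j' != j) E S (clique i j) (clique i j').

Lemma qdrift_megastar S : qdrift edge r q S = \sum_(i < l) branch_drift S i.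
Proof.
rewrite /qdrift big_megastar /= big_outN_centre outdeg_centre mulr_sumr -big_split /=.
apply: eq_bigr => i _.
rewrite big_outN_feeder outdeg_feeder.
under [\sum_(j < m) (_ * _)]eq_bigr => j _
  do rewrite big_outN_reservoir outdeg_reservoir invr1 mul1r.
under [\sum_(j < k) (_ * _)]eq_bigr => j _ do rewrite big_outN_clique outdeg_clique.
rewrite /= -mulr_sumr /branch_drift !big_split /=; ring.
Qed.
End MegastarDrift.

Lemma sum_offdiag_ge0 (R : realDomainType) (I : finType) (F : I -> I -> R) :
  (forall i j, 0 <= F i j + F j i) -> 0 <= \sum_i \sum_(j | j != i) F i j.
Proof.
move=> F_sym_ge0.
have swap : \sum_i \sum_(j | j != i) F i j = \sum_i \sum_(j | j != i) F j i.
  rewrite (exchange_big_dep predT) //=; apply: eq_bigr => i _.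
  by apply: eq_bigl => j; rewrite eq_sym.
suff : 0 <= \sum_i \sum_(j | j != i) F i j + \sum_i \sum_(j | j != i) F i j by lra.
rewrite {2}swap -big_split /=; apply: sumr_ge0 => i _.
by rewrite -big_split /=; apply: sumr_ge0.
Qed.

Lemma four_pow_ge (J : nat) : (2 <= J)%N -> (4 + 6 * J <= 4 ^ J)%N.
Proof.
elim: J => [//|J IHJ] J_ge2.
have [J_le1|J_ge2'] := leqP J 1; first by have -> : J = 1%N by lia.
by rewrite expnS; have := IHJ J_ge2'; lia.
Qed.

Lemma inv_52_le (R : realFieldType) (r s : R) :
  1 <= r -> 0 < s -> (52 * r ^+ 2 * s)^-1 <= (1 + r ^+ 2)^-1 / s / 2.
Proof.
move=> r_ge1 s_gt0; have r2_ge1 : 1 <= r ^+ 2 by rewrite expr_ge1 // (le_trans ler01).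
rewrite -!invfM lef_pV2 ?posrE; try by rewrite !mulr_gt0 //; lra.
by rewrite mulrAC ler_pM2r //; lra.
Qed.

Section MegastarPotential.
Variables (R : realType) (k l m : nat) (r : R).
Hypothesis r_ge1 : 1 <= r.
Hypothesis l_gt0 : (0 < l)%N.
Hypothesis m_gt0 : (0 < m)%N.
Hypothesis k_gt0 : (0 < k)%N.
Local Notation V := (megastar_V k l m).
Local Notation p := ((1 + r ^+ 2)^-1 : R).
Local Notation s := (Num.sqrt #|V|%:R : R).

Definition odds (v : V) : R :=
  match v with
  | centre => r ^+ 2
  | reservoir _ _ => r ^+ 2 * l%:R
  | clique _ _ => r ^+ 2
  | feeder _ => r / m%:R
  end.

Definition qv (v : V) : R := (1 + odds v)^-1.

Definition loss (a : R) : R := r * a / (1 + a).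

Lemma r_ge0 : 0 <= r.
Proof. exact: le_trans ler01 r_ge1. Qed.

Lemma r_le_r2 : r <= r ^+ 2.
Proof. by rewrite expr2 ler_peMl ?r_ge0. Qed.

Lemma r2_ge1 : 1 <= r ^+ 2.
Proof. exact: le_trans r_ge1 r_le_r2. Qed.

Lemma r2_add1_gt0 : 0 < 1 + r ^+ 2.
Proof. by have := r2_ge1; lra. Qed.

Lemma p_gt0 : 0 < p.
Proof. by rewrite invr_gt0 r2_add1_gt0. Qed.

Lemma odds_ge0 v : 0 <= odds v.
Proof.
by case: v => [[i [[j|j]|[]]]|] /=; rewrite ?mulr_ge0 ?divr_ge0 ?exprn_ge0 ?r_ge0.
Qed.

Lemma qv_gt0 v : 0 < qv v.
Proof. by rewrite invr_gt0; have := odds_ge0 v; lra. Qed.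

Lemma qv_le1 v : qv v <= 1.
Proof. by rewrite invf_le1; have := odds_ge0 v; lra. Qed.

Lemma loss_ge0 a : 0 <= a -> 0 <= loss a.
Proof. by move=> a_ge0; rewrite divr_ge0 ?mulr_ge0 ?r_ge0 //; lra. Qed.

Lemma loss_le_r a : 0 <= a -> loss a <= r.
Proof.
move=> a_ge0; rewrite ler_pdivrMr; last by lra.
by rewrite ler_wpM2l ?r_ge0 //; lra.
Qed.

Lemma loss_le a : 0 <= a -> loss a <= r * a.
Proof.
move=> a_ge0; rewrite ler_pdivrMr; last by lra.
by rewrite ler_peMr ?mulr_ge0 ?r_ge0 //; lra.
Qed.

Lemma qgain_qv S v w : qgain r qv S v w =
  if v \in S then (if w \in S then 0 else - loss (odds w))
  else (if w \in S then odds w else 0).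
Proof.
have odds_gt : 0 < 1 + odds w by have := odds_ge0 w; lra.
rewrite /qgain /qv /loss invrK.
by case: (v \in S); case: (w \in S) => //; [field; rewrite gt_eqF | ring].
Qed.

Local Notation E := (qgain r qv).

(* The drift of a branch balances at the pair (feeder, centre): each reservoir
   path centre -> R -> feeder supplies [transfer] / m, each path feeder -> K ->
   centre loses at most [transfer], and [transfer] only sees those two states. *)
Definition transfer (feeder_mutant centre_mutant : bool) : R :=
  if feeder_mutant then (if centre_mutant then 0 else r)
  else (if centre_mutant then - r ^+ 2 else 0).

Lemma reservoir_edges_ge (S : {set V}) i j :
  transfer (feeder i \in S) (centre \in S) / m%:R <=
  (l * m)%:R^-1 * E S centre (reservoir i j) + E S (reservoir i j) (feeder i).
Proof.
rewrite !qgain_qv /transfer.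
set a_res := odds (reservoir i j); set a_feeder := odds (feeder i).
have res_loss_ge0 : 0 <= loss a_res := loss_ge0 (odds_ge0 _).
have feeder_loss_ge0 : 0 <= loss a_feeder := loss_ge0 (odds_ge0 _).
have lm_inv : (l * m)%:R^-1 = l%:R^-1 / m%:R :> R by rewrite natrM invfM.
have centre_gain : (l * m)%:R^-1 * a_res = r ^+ 2 / m%:R.
  by rewrite lm_inv /a_res /=; field; rewrite !pnatr_eq0 -!lt0n l_gt0 m_gt0.
have centre_loss : (l * m)%:R^-1 * loss a_res <= r / m%:R.
  rewrite lm_inv mulrAC ler_pM2r ?invr_gt0 ?ltr0n // -[r]mul1r.
  by apply: ler_pM; rewrite ?invr_ge0 ?ler0n ?loss_le_r ?odds_ge0 ?invf_le1 ?ltr0n ?ler1n.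
have feeder_loss : loss a_feeder <= r ^+ 2 / m%:R.
  by rewrite expr2 -mulrA loss_le ?odds_ge0.
have feeder_gain : a_feeder = r / m%:R by [].
have r_le_r2 : r / m%:R <= r ^+ 2 / m%:R by rewrite ler_pM2r ?invr_gt0 ?ltr0n ?r_le_r2.
by case: (centre \in S); case: (reservoir i j \in S); case: (feeder i \in S) => /=; lra.
Qed.

Lemma clique_edges_ge (S : {set V}) i j :
  - transfer (feeder i \in S) (centre \in S) <=
  E S (feeder i) (clique i j) + E S (clique i j) centre.
Proof.
rewrite !qgain_qv /transfer /=.
have loss_ge0 : 0 <= loss (r ^+ 2) by rewrite loss_ge0 ?exprn_ge0 ?r_ge0.
have loss_le : loss (r ^+ 2) <= r by rewrite loss_le_r ?exprn_ge0 ?r_ge0.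
have := r_le_r2.
by case: (centre \in S); case: (clique i j \in S); case: (feeder i \in S) => /=; lra.
Qed.

Lemma clique_pair_ge0 (S : {set V}) i j j' :
  0 <= E S (clique i j) (clique i j') + E S (clique i j') (clique i j).
Proof.
rewrite !qgain_qv /=.
have loss_le : loss (r ^+ 2) <= r by rewrite loss_le_r ?exprn_ge0 ?r_ge0.
have := r_le_r2.
by case: (clique i j \in S); case: (clique i j' \in S) => /=; lra.
Qed.

Lemma branch_drift_ge0 (S : {set V}) i : 0 <= branch_drift r qv S i.
Proof.
rewrite /branch_drift; set t := transfer (feeder i \in S) (centre \in S).
have reservoirs : t <= (l * m)%:R^-1 * \sum_(j < m) E S centre (reservoir i j)
                       + \sum_(j < m) E S (reservoir i j) (feeder i).
  rewrite mulr_sumr -big_split /=.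
  apply: le_trans (ler_sum _ (fun j _ => reservoir_edges_ge S i j)).
  by rewrite sumr_const card_ord -/t -(mulr_natr (t / _)) divfK // pnatr_eq0 -lt0n.
have cliques : - t <= k%:R^-1 *
    \sum_(j < k) (E S (feeder i) (clique i j) + E S (clique i j) centre).
  rewrite ler_pdivlMl ?ltr0n //.
  apply: le_trans (ler_sum _ (fun j _ => clique_edges_ge S i j)).
  by rewrite sumr_const card_ord mulr_natl.
have pairs : 0 <= k%:R^-1 *
    \sum_(j < k) \sum_(j' < k | j' != j) E S (clique i j) (clique i j').
  rewrite mulr_ge0 ?invr_ge0 ?ler0n // sum_offdiag_ge0 // => j j'.
  exact: clique_pair_ge0.
lra.
Qed.

Lemma qdrift_megastar_ge0 (S : {set V}) : 0 <= qdrift (@megastar_edge k l m) r qv S.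
Proof. by rewrite qdrift_megastar // sumr_ge0 // => i _; apply: branch_drift_ge0. Qed.
Lemma p_le_qv_reservoir i j : p / l%:R <= qv (reservoir i j : V).
Proof.
have l_ge1 : 1 <= l%:R :> R by rewrite ler1n.
rewrite /qv /= -invfM lef_pV2 ?posrE; last by have := r2_ge1; nra.
  by rewrite mulrDl mul1r lerD2r.
by rewrite mulr_gt0 ?ltr0n //; have := r2_ge1; lra.
Qed.

Lemma p_le_qv_feeder i : p <= qv (feeder i : V).
Proof.
have rm_ge0 : 0 <= r / m%:R by rewrite divr_ge0 ?r_ge0.
have rm_le_r : r / m%:R <= r by rewrite ler_pdivrMr ?ltr0n // ler_peMr ?ler1n ?r_ge0.
by rewrite /qv /= lef_pV2 ?posrE ?r2_add1_gt0; have := r_le_r2; lra.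
Qed.

Lemma sum_qv_ge : p * (1 + m + l * k + l)%:R <= \sum_(v : V) qv v.
Proof.
have l_neq0 : l%:R != 0 :> R by rewrite pnatr_eq0 -lt0n.
have branch_ge i : p * (m%:R / l%:R + k%:R + 1) <=
    \sum_(j < m) qv (reservoir i j : V) + \sum_(j < k) qv (clique i j : V)
    + qv (feeder i : V).
  rewrite !mulrDr mulr1; apply: lerD; last exact: p_le_qv_feeder.
  apply: lerD.
    apply: le_trans (ler_sum _ (fun j _ => p_le_qv_reservoir i j)).
    by rewrite sumr_const card_ord -(mulr_natr (p / _)) mulrAC -mulrA.
  by rewrite (eq_bigr (fun _ => p)) // sumr_const card_ord -(mulr_natr p).
rewrite big_megastar /=.
apply: le_trans (lerD (lexx _) (ler_sum _ (fun i _ => branch_ge i))).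
rewrite sumr_const card_ord -(mulr_natr (_ * (_ + _ + 1))) /qv /= !natrD natrM.
rewrite -subr_ge0 [_ - _](_ : _ = 0) //; field.
by rewrite l_neq0 gt_eqF ?r2_add1_gt0.
Qed.

Lemma mean_qv_ge : p / s <= #|V|%:R^-1 * \sum_(v : V) qv v.
Proof.
have n_le : (#|V| <= (1 + m + l * k + l) ^ 2)%N by rewrite card_megastar; nia.
have s_le : s <= (1 + m + l * k + l)%:R.
  rewrite -(ger0_norm (ler0n R (1 + m + l * k + l))) -sqrtr_sqr.
  by rewrite ler_sqrt ?exprn_ge0 // -natrX ler_nat.
have p_ge0 := ltW p_gt0.
rewrite -{2}[#|V|%:R](sqr_sqrtr (ler0n R #|V|)) expr2.
rewrite (_ : p / s = (s * s)^-1 * (p * s)); last first.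
  by field; rewrite !gt_eqF ?r2_add1_gt0 ?sqrt_card_megastar_gt0.
rewrite ler_wpM2l ?invr_ge0 ?mulr_ge0 ?sqrtr_ge0 //.
by apply: le_trans sum_qv_ge; rewrite ler_wpM2l.
Qed.
Lemma qv_reservoir_le i j : qv (reservoir i j : V) <= p.
Proof.
have r2_ge0 : 0 <= r ^+ 2 := le_trans ler01 r2_ge1.
rewrite /qv /= lef_pV2 ?posrE ?lerD2l ?ler_peMr ?ler1n ?r2_add1_gt0 //.
by have := mulr_ge0 r2_ge0 (ler0n R l); lra.
Qed.

Lemma qprod_qv_le : qprod qv [set: V] <= p ^+ (1 + l * (m + k)).
Proof.
have p_ge0 := ltW p_gt0.
have qv_ge0 v : 0 <= qv v by rewrite ltW ?qv_gt0.
rewrite /qprod (eq_bigl predT) => [|v]; last by rewrite finset.in_setT.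
rewrite big_megastar /= add1n exprS ler_wpM2l // mulnC exprM.
have -> : p ^+ (m + k) ^+ l = \prod_(i < l) p ^+ (m + k) by rewrite prodr_const card_ord.
apply: ler_prod => i _; rewrite !mulr_ge0 ?prodr_ge0 //=.
rewrite -[X in _ <= X]mulr1 exprD ler_pM ?mulr_ge0 ?prodr_ge0 ?exprn_ge0 ?qv_le1 //.
have -> : \prod_(j < k) qv (clique i j : V) = p ^+ k.
  by rewrite (eq_bigr (fun _ => p)) // prodr_const card_ord.
rewrite ler_wpM2r ?exprn_ge0 //.
have -> : p ^+ m = \prod_(j < m) p by rewrite prodr_const card_ord.
by apply: ler_prod => j _; rewrite qv_ge0 qv_reservoir_le.
Qed.
Lemma qprod_qv_le_half : qprod qv [set: V] <= p / s / 2.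
Proof.
have p_ge0 := ltW p_gt0.
have J_ge2 : (2 <= l * (m + k))%N by nia.
have n_le : (4 * #|V| <= 4 ^ (l * (m + k)))%N.
  by rewrite card_megastar; have := four_pow_ge J_ge2; nia.
have s_le : 2 * s <= 2 ^+ (l * (m + k)).
  rewrite -ler_sqr ?nnegrE ?mulr_ge0 ?sqrtr_ge0 ?exprn_ge0 //.
  by rewrite exprMn sqr_sqrtr // -exprM mulnC exprM -!natrX -natrM ler_nat.
have p_le_half : p <= 2^-1 by rewrite lef_pV2 ?posrE ?r2_add1_gt0 //; have := r2_ge1; lra.
apply: le_trans qprod_qv_le _.
rewrite add1n exprS -mulrA ler_wpM2l // -invfM mulrC.
apply: le_trans (lerXn2r _ _ _ p_le_half) _; rewrite ?nnegrE ?invr_ge0 ?(ltW r2_add1_gt0) //.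
by rewrite exprVn lef_pV2 ?posrE ?mulr_gt0 ?exprn_gt0 ?sqrt_card_megastar_gt0.
Qed.
End MegastarPotential.

Theorem theorem7p3 (R : realType) (r : R) (k l m : nat) :
  1 < r -> (0 < k)%N -> (0 < l)%N -> (0 < m)%N ->
  let n := #|megastar_V k l m| in
  fixation_prob_uniform (@megastar_edge k l m) r
    <= 1 - (52 * r ^+ 2 * Num.sqrt (n%:R))^-1.
Proof.
move=> r_gt1 k_gt0 l_gt0 m_gt0 /=.
have r_ge1 := ltW r_gt1.
have r_gt0 : 0 < r := lt_trans ltr01 r_gt1.
have V_gt0 : (0 < #|megastar_V k l m|)%N by rewrite card_megastar.
apply: le_trans (fixation_prob_uniform_le r_gt0 V_gt0
  (outdeg_megastar_gt0 k_gt0 l_gt0 m_gt0) (qv_gt0 r_ge1) (qv_le1 r_ge1)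
  (qdrift_megastar_ge0 r_ge1 l_gt0 m_gt0 k_gt0)) _.
have := qprod_qv_le_half r_ge1 l_gt0 m_gt0 k_gt0.
have := mean_qv_ge r_ge1 l_gt0 m_gt0 k_gt0.
have := inv_52_le r_ge1 (sqrt_card_megastar_gt0 R k l m).
lra.
Qed.
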